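(* Let $n_1,n_2,n_3$ be pairwise coprime positive integers forming a minimal system of generators of $\mathcal S=\langle n_1,n_2,n_3\rangle$, and let $\{i,j,k\}=\{1,2,3\}$. Put $\lambda_{ij}=[-n_in_j^{-1}]_{n_k}$ and $\lambda_{ik}=[-n_in_k^{-1}]_{n_j}$. Then $\lambda_{ij},\lambda_{ik}$ are positive integers and $$n_i=n_jn_k-\lambda_{ij}n_j-\lambda_{ik}n_k .$$
   Context: $\mathbb N$ denotes the nonnegative integers. For integers $a_1,\dots,a_r$, $\langle a_1,\dots,a_r\rangle=\{\sum t_la_l: t_l\in\mathbb N\}$. Minimal system of generators means that no $n_l$ belongs to the monoid generated by the other two. For an integer $m$ and $n\ge 1$, $[m]_n\in\{0,\dots,n-1\}$ denotes the remainder of $m$ upon division by $n$; for $a$ coprime to $n$, the symbol $a^{-1}$ inside $[\cdot]_n$ denotes a multiplicative inverse of $a$ modulo $n$ (the remainder does not depend on the choice). *)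

From HB Require Import structures.
From mathcomp Require Import all_boot all_order all_algebra.
Set Implicit Arguments. Unset Strict Implicit. Unset Printing Implicit Defensive.
Import Order.TTheory GRing.Theory Num.Theory.

Definition in_monoid2 (x a b : nat) : Prop :=
  exists t1 t2 : nat, x = t1 * a + t2 * b.

Definition minimal_gens3 (n : 'I_3 -> nat) : Prop :=
  forall i j k : 'I_3, i != j -> j != k -> i != k -> ~ in_monoid2 (n i) (n j) (n k).

From HB Require Import structures.
From mathcomp Require Import all_boot all_order all_algebra zify ring.
Set Implicit Arguments. Unset Strict Implicit. Unset Printing Implicit Defensive.
Import Order.TTheory GRing.Theory Num.Theory.
Local Open Scope ring_scope.

(* With a := lambda_ij and b := lambda_ik, the number n_i + a n_j + b n_k is
   divisible by n_k (as a n_j = -n_i mod n_k) and by n_j, hence by n_j n_k: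
   n_i = m n_j n_k - a n_j - b n_k.  Minimality forbids a = 0 (then n_i would
   be a multiple of n_j), b = 0, and m >= 2 (then n_i would be
   (n_k - a) n_j + ((m - 1) n_j - b) n_k with nonnegative coefficients). *)

Lemma dvdz_add_mulNinv_mod (x y w c : int) :
  (w * y = 1 %[mod c])%Z -> (c %| x + ((- x * w) %% c)%Z * y)%Z.
Proof.
move=> wy1; apply/dvdz_mod0P.
rewrite -modzDmr modzMml modzDmr !mulNr -mulrA -modzDmr -modzNm -modzMmr wy1.
by rewrite modzMmr modzNm modzDmr mulr1 addrN mod0z.
Qed.

Lemma in_monoid2_of_int (x y z : nat) (t1 t2 : int) : 0 <= t1 -> 0 <= t2 ->
  x%:Z = t1 * y%:Z + t2 * z%:Z -> in_monoid2 x y z.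
Proof.
move=> t1_ge0 t2_ge0 ex; exists `|t1|%N, `|t2|%N.
by apply/eqP; rewrite -eqz_nat PoszD !PoszM !gez0_abs // ex.
Qed.

Section NonGeneratorDecomposition.

Variables (x y z : nat) (a b m : int).
Hypotheses (y_gt0 : (0 < y)%N) (z_gt0 : (0 < z)%N).
Hypothesis x_notin : ~ in_monoid2 x y z.
Hypotheses (a_bounds : 0 <= a < z%:Z) (b_bounds : 0 <= b < y%:Z).
Hypothesis x_eq : x%:Z = m * (y%:Z * z%:Z) - a * y%:Z - b * z%:Z.

Let x_gt0 : (0 < x)%N.
Proof. by rewrite lt0n; apply/eqP=> x0; apply: x_notin; exists 0%N, 0%N; rewrite x0. Qed.

Let m_gt0 : 0 < m.
Proof.
have : 0 < m * (y%:Z * z%:Z) by rewrite -[_ * _](subrK (a * y%:Z + b * z%:Z)); nia.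
by rewrite pmulr_lgt0 // mulr_gt0 // ltz_nat.
Qed.

Lemma decomp_coef_y_gt0 : 0 < a.
Proof.
rewrite lt_def; case/andP: a_bounds => -> _; rewrite andbT.
apply/eqP=> a0; apply: x_notin; apply: (@in_monoid2_of_int _ _ _ 0 (m * y%:Z - b)) => //.
  by nia.
by rewrite x_eq a0; ring.
Qed.

Lemma decomp_coef_z_gt0 : 0 < b.
Proof.
rewrite lt_def; case/andP: b_bounds => -> _; rewrite andbT.
apply/eqP=> b0; apply: x_notin; apply: (@in_monoid2_of_int _ _ _ (m * z%:Z - a) 0) => //.
  by nia.
by rewrite x_eq b0; ring.
Qed.

Lemma decomp_multiplier_eq1 : m = 1.
Proof.
have [m_gt1|m_le1] := ltrP 1 m; last by lia.
exfalso; apply: x_notin; apply: (@in_monoid2_of_int _ _ _ (z%:Z - a) ((m - 1) * y%:Z - b)).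
- by lia.
- by nia.
- by rewrite x_eq; ring.
Qed.

End NonGeneratorDecomposition.

Theorem mainTheorem1 (n : 'I_3 -> nat)
  (hpos : forall l, (0 < n l)%N)
  (hcop : forall l m, l != m -> coprime (n l) (n m))
  (hmin : minimal_gens3 n)
  (i j k : 'I_3) (hij : i != j) (hjk : j != k) (hik : i != k)
  (u v : int)
  (hu : (u * (n j)%:Z = 1 %[mod (n k)%:Z])%Z)
  (hv : (v * (n k)%:Z = 1 %[mod (n j)%:Z])%Z) :
  let lij := ((- (n i)%:Z * u) %% (n k)%:Z)%Z in
  let lik := ((- (n i)%:Z * v) %% (n j)%:Z)%Z in
  0 < lij /\ 0 < lik /\
  (n i)%:Z = (n j)%:Z * (n k)%:Z - lij * (n j)%:Z - lik * (n k)%:Z.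
Proof.
move=> lij lik.
have [nj_gt0 nk_gt0] := (hpos j, hpos k).
have lij_bounds : 0 <= lij < (n k)%:Z by rewrite /lij; lia.
have lik_bounds : 0 <= lik < (n j)%:Z by rewrite /lik; lia.
have dvd_k : ((n k)%:Z %| (n i)%:Z + lij * (n j)%:Z + lik * (n k)%:Z)%Z.
  by apply: rpredD; [exact: dvdz_add_mulNinv_mod | exact/dvdz_mull/dvdzz].
have dvd_j : ((n j)%:Z %| (n i)%:Z + lij * (n j)%:Z + lik * (n k)%:Z)%Z.
  by rewrite addrAC; apply: rpredD; [exact: dvdz_add_mulNinv_mod | exact/dvdz_mull/dvdzz].
have /dvdzP[m em] : ((n j)%:Z * (n k)%:Z %| (n i)%:Z + lij * (n j)%:Z + lik * (n k)%:Z)%Z.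
  by rewrite Gauss_dvdz ?dvd_j ?dvd_k // coprimezE hcop.
have ni_eq : (n i)%:Z = m * ((n j)%:Z * (n k)%:Z) - lij * (n j)%:Z - lik * (n k)%:Z.
  by rewrite -em; ring.
have ni_notin := hmin i j k hij hjk hik.
split; first exact: decomp_coef_y_gt0 nj_gt0 nk_gt0 ni_notin lij_bounds lik_bounds ni_eq.
split; first exact: decomp_coef_z_gt0 nj_gt0 nk_gt0 ni_notin lij_bounds lik_bounds ni_eq.
by rewrite ni_eq (decomp_multiplier_eq1 nj_gt0 nk_gt0 ni_notin lij_bounds lik_bounds ni_eq) mul1r.
Qed.
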